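(* Assume Case (III) holds with $\mathrm{rank}(\mathbf H)=m$, and let $\mathbf y^\star$ be the unique least squares solution of $\mathbf z=\mathbf H\mathbf y$. Suppose $\mathrm G_{\sigma(t)}\equiv\mathrm G^S$ is the fixed complete digraph on $\mathrm V$ (all ordered pairs of distinct nodes are arcs) and $a_{ij}(t)\equiv a^S>0$ for all $i,j$. Then for every initial value $\mathbf x(0)\in\mathcal A_1\times\cdots\times\mathcal A_N$, along the ''projection consensus'' flow, $\lim_{t\to\infty}\frac1N\sum_{i=1}^N\mathbf x_i(t)=\mathbf y^\star$.
   Context: Setting: $N,m\ge1$; $\mathbf H\in\mathbb R^{N\times m}$ has rows $\mathbf h_1^T,\dots,\mathbf h_N^T$ with $\|\mathbf h_i\|=1$; $\mathbf z=(z_1,\dots,z_N)^T$. $\mathcal A_i=\{\mathbf y\in\mathbb R^m:\mathbf h_i^T\mathbf y=z_i\}$, $\mathcal P_{\mathcal A_i}(\mathbf y)=(I-\mathbf h_i\mathbf h_i^T)\mathbf y+z_i\mathbf h_i$ its Euclidean projection. Case (III): $\mathbf z$ is not in the column space of $\mathbf H$; least squares solution $\mathbf y^\star=(\mathbf H^T\mathbf H)^{-1}\mathbf H^T\mathbf z$. $\mathrm V=\{1,\dots,N\}$, $\mathrm N_i=\mathrm V\setminus\{i\}$ for the complete graph. The ''projection consensus'' flow is $\dot{\mathbf x}_i=\sum_{j\in\mathrm N_i}a_{ij}\big(\mathcal P_{\mathcal A_i}(\mathbf x_j)-\mathcal P_{\mathcal A_i}(\mathbf x_i)\big)$, $i\in\mathrm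 V$, $\mathbf x_i(t)\in\mathbb R^m$. *)

From Stdlib Require Import Reals.
Open Scope R_scope.

(* Vectors in R^m are functions nat -> R (only indices < m matter).
   The matrix H in R^{N x m} is H : nat -> nat -> R, row i being H i. *)

Fixpoint fsum (n : nat) (f : nat -> R) : R :=
  match n with
  | O => 0
  | S n' => fsum n' f + f n'
  end.

Definition dot (m : nat) (u v : nat -> R) : R := fsum m (fun k => u k * v k).

Definition matvec (m : nat) (H : nat -> nat -> R) (y : nat -> R) (i : nat) : R :=
  dot m (H i) y.

Definition full_col_rank (N m : nat) (H : nat -> nat -> R) : Prop :=
  forall y : nat -> R,
    (forall i, (i < N)%nat -> matvec m H y i = 0) ->
    forall k, (k < m)%nat -> y k = 0.

Definition not_in_col_space (N m : nat) (H : nat -> nat -> R) (z : nat -> R) : Prop :=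
  ~ exists y : nat -> R, forall i, (i < N)%nat -> matvec m H y i = z i.

Definition residual2 (N m : nat) (H : nat -> nat -> R) (z y : nat -> R) : R :=
  fsum N (fun i => (z i - matvec m H y i) ^ 2).

Definition least_squares_sol (N m : nat) (H : nat -> nat -> R) (z y : nat -> R) : Prop :=
  forall y', residual2 N m H z y <= residual2 N m H z y'.

(* Euclidean projection onto A_i = {y | h_i^T y = z_i}:
   P_{A_i}(y) = (I - h_i h_i^T) y + z_i h_i *)
Definition projA (m : nat) (H : nat -> nat -> R) (z : nat -> R) (i : nat)
  (y : nat -> R) : nat -> R :=
  fun k => y k - H i k * dot m (H i) y + z i * H i k.

(* right-hand side of the projection consensus flow on the complete graph,
   N_i = V \ {i}, with arc weights a i j:
   sum_{j in N_i} a_ij (P_{A_i}(x_j) - P_{A_i}(x_i)), coordinate k *)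
Definition pc_rhs (N m : nat) (H : nat -> nat -> R) (z : nat -> R)
  (a : nat -> nat -> R) (x : nat -> nat -> R) (i k : nat) : R :=
  fsum N (fun j => if Nat.eq_dec j i then 0
                   else a i j * (projA m H z i (x j) k - projA m H z i (x i) k)).

Definition tends_at_infty (f : R -> R) (l : R) : Prop :=
  forall eps, 0 < eps -> exists T, forall t, T <= t -> Rabs (f t - l) < eps.

(* Write [e_i = x_i - avg x] and [u_i = (I - h_i h_i^T) e_i]; on the complete
   graph the flow is [x_i' = -a N u_i].  Hence [h_i^T x_i] is conserved, the
   disagreement [V = sum |e_i|^2] has derivative [-2aN W] with
   [W = sum |u_i|^2], and [W] itself is nonincreasing, so [W(T) = O(1/T)].
   Conservation together with the normal equations turns [sum_i u_i] into
   [H^T H (avg x - y^⋆)], and inverting the Gram matrix [H^T H] (rank m) bounds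
   [|avg x - y^⋆|^2] by a multiple of [W]. *)

From Stdlib Require Import Reals Lra Lia Psatz.
From mathcomp Require all_boot all_algebra Rstruct.
Open Scope R_scope.

Module MatrixInverse.
Import all_boot all_algebra Rstruct GRing.Theory.
Local Open Scope ring_scope.

Lemma fsum_big (n : nat) (f : nat -> R) : fsum n f = (\sum_(j < n) f j)%R.
Proof.
elim: n => [|n IH]; first by rewrite big_ord0.
by rewrite big_ord_recr /= IH.
Qed.

Lemma injective_left_inverse (m : nat) (A : nat -> nat -> R) :
  (forall v : nat -> R, (forall l, (l < m)%coq_nat -> fsum m (fun j => A l j * v j) = 0) ->
      forall k, (k < m)%coq_nat -> v k = 0) ->
  exists B : nat -> nat -> R, forall (v : nat -> R) k, (k < m)%coq_nat ->
    v k = fsum m (fun l => B k l * fsum m (fun j => A l j * v j)).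
Proof.
move=> Ainj.
pose M : 'M[R]_m := \matrix_(i < m, j < m) A i j.
have M_inj (cv : 'cV[R]_m) : M *m cv = 0 -> cv = 0.
  move=> Mcv0.
  pose v j := if (j < m)%N =P true is ReflectT Hj then cv (Ordinal Hj) ord0 else 0.
  have vE (j : 'I_m) : v j = cv j ord0.
    rewrite /v; case: eqP => [Hj|]; last by rewrite ltn_ord.
    by congr (cv _ _); apply: val_inj.
  apply/matrixP => i j0; rewrite (ord1 j0) mxE -vE.
  apply: Ainj; last by apply/ltP; exact: ltn_ord.
  move=> l /ltP Hl.
  have := congr1 (fun X : 'M[R]_(m,1) => X (Ordinal Hl) ord0) Mcv0.
  rewrite !mxE => <-; rewrite fsum_big.
  by apply: eq_bigr => j _; rewrite !mxE vE.
have M_unit : M \in unitmx.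
  rewrite -unitmx_tr -row_free_unit -kermx_eq0; apply/eqP.
  apply/row_matrixP => i; rewrite row0.
  have ker : row i (kermx M^T) *m M^T = 0 by apply/sub_kermxP; exact: row_sub.
  have kerT : M *m (row i (kermx M^T))^T = 0.
    by apply: trmx_inj; rewrite trmx_mul trmxK trmx0.
  by move: (M_inj _ kerT) => /(congr1 trmx); rewrite trmxK trmx0.
pose B k l := if (k < m)%N =P true is ReflectT Hk then
                if (l < m)%N =P true is ReflectT Hl then invmx M (Ordinal Hk) (Ordinal Hl) else 0
              else 0.
exists B => v k /ltP Hk.
have := congr1 (fun X : 'M[R]_(m,1) => X (Ordinal Hk) ord0) (mulKmx M_unit (\col_(j < m) v j)).
rewrite !mxE => <-; rewrite fsum_big.
apply: eq_bigr => l _; rewrite !mxE fsum_big /B.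
case: eqP => [Hk'|]; last by rewrite Hk.
case: eqP => [Hl'|]; last by rewrite ltn_ord.
congr (_ * _); first by congr (invmx M _ _); apply: val_inj.
by apply: eq_bigr => j _; rewrite !mxE.
Qed.

End MatrixInverse.

Set Bullet Behavior "Strict Subproofs".

Lemma fsum_ext n f g : (forall j, (j < n)%nat -> f j = g j) -> fsum n f = fsum n g.
Proof.
induction n; intros Hfg; simpl; [reflexivity|].
rewrite IHn, Hfg; [reflexivity|lia|intros; apply Hfg; lia].
Qed.

Lemma fsum_plus n f g : fsum n (fun j => f j + g j) = fsum n f + fsum n g.
Proof. induction n; simpl; [ring|]. rewrite IHn. ring. Qed.

Lemma fsum_minus n f g : fsum n (fun j => f j - g j) = fsum n f - fsum n g.
Proof. induction n; simpl; [ring|]. rewrite IHn. ring. Qed.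

Lemma fsum_scal n c f : fsum n (fun j => c * f j) = c * fsum n f.
Proof. induction n; simpl; [ring|]. rewrite IHn. ring. Qed.

Lemma fsum_scalr n c f : fsum n (fun j => f j * c) = fsum n f * c.
Proof. induction n; simpl; [ring|]. rewrite IHn. ring. Qed.

Lemma fsum_const n c : fsum n (fun _ => c) = INR n * c.
Proof. induction n; simpl fsum; [simpl; ring|]. rewrite IHn, S_INR. ring. Qed.

Lemma fsum_zero n : fsum n (fun _ => 0) = 0.
Proof. rewrite fsum_const. ring. Qed.

Lemma fsum_swap n m (f : nat -> nat -> R) :
  fsum n (fun i => fsum m (fun j => f i j)) = fsum m (fun j => fsum n (fun i => f i j)).
Proof.
induction n; simpl.
- symmetry; apply fsum_zero.
- rewrite IHn, <- fsum_plus. reflexivity.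
Qed.

Lemma fsum_le n f g : (forall j, (j < n)%nat -> f j <= g j) -> fsum n f <= fsum n g.
Proof.
induction n; simpl; intros Hfg; [lra|].
assert (fsum n f <= fsum n g) by (apply IHn; intros; apply Hfg; lia).
assert (f n <= g n) by (apply Hfg; lia). lra.
Qed.

Lemma fsum_nonneg n f : (forall j, (j < n)%nat -> 0 <= f j) -> 0 <= fsum n f.
Proof. intros Hf. rewrite <- (fsum_zero n). apply fsum_le. exact Hf. Qed.

Lemma fsum_eq0 n f : (forall j, (j < n)%nat -> 0 <= f j) -> fsum n f = 0 ->
  forall j, (j < n)%nat -> f j = 0.
Proof.
induction n; simpl; intros Hf Hsum j Hj; [lia|].
assert (0 <= fsum n f) by (apply fsum_nonneg; intros; apply Hf; lia).
assert (0 <= f n) by (apply Hf; lia).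
destruct (Nat.eq_dec j n) as [->|]; [lra|].
apply IHn; [intros; apply Hf; lia|lra|lia].
Qed.

Lemma fsum_term_le n f j : (j < n)%nat -> (forall i, (i < n)%nat -> 0 <= f i) ->
  f j <= fsum n f.
Proof.
induction n; simpl; intros Hj Hf; [lia|].
assert (0 <= fsum n f) by (apply fsum_nonneg; intros; apply Hf; lia).
destruct (Nat.eq_dec j n) as [->|]; [lra|].
assert (f j <= fsum n f) by (apply IHn; [lia|intros; apply Hf; lia]).
assert (0 <= f n) by (apply Hf; lia). lra.
Qed.

Lemma fsum_delta n k f : (k < n)%nat ->
  fsum n (fun j => f j * (if Nat.eqb j k then 1 else 0)) = f k.
Proof.
induction n; intros Hk; [lia|]. simpl.
destruct (Nat.eq_dec k n) as [->|Hne].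
- rewrite Nat.eqb_refl, (fsum_ext n _ (fun _ => 0)), fsum_zero; [ring|].
  intros j Hj. destruct (Nat.eqb_spec j n); [lia|ring].
- destruct (Nat.eqb_spec n k); [lia|]. rewrite IHn by lia. ring.
Qed.

Lemma fsum_sq_le n (a : nat -> R) : (fsum n a) ^ 2 <= INR n * fsum n (fun j => a j ^ 2).
Proof.
destruct n as [|n]; [simpl; lra|].
assert (Hn : 0 < INR (S n)) by (apply lt_0_INR; lia).
set (mu := / INR (S n) * fsum (S n) a).
(* the sum of the squared deviations from the mean [mu] is nonnegative *)
assert (Hdev : 0 <= fsum (S n) (fun j => (a j - mu) ^ 2))
  by (apply fsum_nonneg; intros; apply pow2_ge_0).
rewrite (fsum_ext _ _ (fun j => a j ^ 2 + (-2 * mu) * a j + mu ^ 2)) in Hdev by (intros; ring).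
rewrite !fsum_plus, fsum_scal, fsum_const in Hdev.
unfold mu in Hdev.
replace (fsum (S n) (fun j => a j ^ 2) + -2 * (/ INR (S n) * fsum (S n) a) * fsum (S n) a
         + INR (S n) * (/ INR (S n) * fsum (S n) a) ^ 2)
  with (/ INR (S n) * (INR (S n) * fsum (S n) (fun j => a j ^ 2) - fsum (S n) a ^ 2))
  in Hdev by (field; lra).
assert (0 < / INR (S n)) by (apply Rinv_0_lt_compat; lra).
nra.
Qed.

Lemma derivable_pt_lim_add f g t lf lg : derivable_pt_lim f t lf -> derivable_pt_lim g t lg ->
  derivable_pt_lim (fun s => f s + g s) t (lf + lg).
Proof. intros Hf Hg. exact (derivable_pt_lim_plus _ _ _ _ _ Hf Hg). Qed.

Lemma derivable_pt_lim_sub f g t lf lg : derivable_pt_lim f t lf -> derivable_pt_lim g t lg ->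
  derivable_pt_lim (fun s => f s - g s) t (lf - lg).
Proof. intros Hf Hg. exact (derivable_pt_lim_minus _ _ _ _ _ Hf Hg). Qed.

Lemma derivable_pt_lim_mul f g t lf lg : derivable_pt_lim f t lf -> derivable_pt_lim g t lg ->
  derivable_pt_lim (fun s => f s * g s) t (lf * g t + f t * lg).
Proof. intros Hf Hg. exact (derivable_pt_lim_mult _ _ _ _ _ Hf Hg). Qed.

Lemma derivable_pt_lim_scale c f t l : derivable_pt_lim f t l ->
  derivable_pt_lim (fun s => c * f s) t (c * l).
Proof. intros Hf. exact (derivable_pt_lim_scal _ _ _ _ Hf). Qed.

Lemma derivable_pt_lim_fsum n (F : nat -> R -> R) (F' : nat -> R) t :
  (forall j, (j < n)%nat -> derivable_pt_lim (F j) t (F' j)) ->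
  derivable_pt_lim (fun s => fsum n (fun j => F j s)) t (fsum n F').
Proof.
induction n; intros HF; simpl.
- apply derivable_pt_lim_const.
- apply derivable_pt_lim_add; [apply IHn; intros|]; apply HF; lia.
Qed.

Lemma nonincreasing_of_derivative_nonpos (f f' : R -> R) a b :
  (forall t, a < t <= b -> derivable_pt_lim f t (f' t)) ->
  (forall t, a < t <= b -> f' t <= 0) ->
  forall s t, a < s -> s <= t -> t <= b -> f t <= f s.
Proof.
intros Hf Hf' s t Hs Hst Htb.
destruct (Rle_lt_or_eq_dec s t Hst) as [Hlt|<-]; [|lra].
destruct (MVT_cor2 f f' s t Hlt) as [r [Hmvt Hr]].
- intros r Hr. apply Hf. lra.
- assert (f' r <= 0) by (apply Hf'; lra). nra.
Qed.

Definition right_continuous_at0 (f : R -> R) : Prop :=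
  forall eps, 0 < eps -> exists delta, 0 < delta /\
    forall t, 0 <= t < delta -> Rabs (f t - f 0) < eps.

Lemma right_continuous_at0_add f g :
  right_continuous_at0 f -> right_continuous_at0 g -> right_continuous_at0 (fun t => f t + g t).
Proof.
intros Hf Hg eps He.
destruct (Hf (eps / 2)) as [d1 [Hd1 Hf1]]; [lra|].
destruct (Hg (eps / 2)) as [d2 [Hd2 Hg2]]; [lra|].
exists (Rmin d1 d2). split; [apply Rmin_pos; assumption|].
intros t Ht.
pose proof (Rmin_l d1 d2). pose proof (Rmin_r d1 d2).
specialize (Hf1 t ltac:(lra)). specialize (Hg2 t ltac:(lra)).
replace (f t + g t - (f 0 + g 0)) with ((f t - f 0) + (g t - g 0)) by ring.
eapply Rle_lt_trans; [apply Rabs_triang|lra].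
Qed.

Lemma right_continuous_at0_scale c f :
  right_continuous_at0 f -> right_continuous_at0 (fun t => c * f t).
Proof.
intros Hf eps He.
assert (Hc : 0 < Rabs c + 1) by (pose proof (Rabs_pos c); lra).
destruct (Hf (eps / (Rabs c + 1))) as [d [Hd Hfd]]; [apply Rdiv_lt_0_compat; assumption|].
exists d. split; [assumption|]. intros t Ht. specialize (Hfd t Ht).
replace (c * f t - c * f 0) with (c * (f t - f 0)) by ring. rewrite Rabs_mult.
assert (Rabs c * Rabs (f t - f 0) <= Rabs c * (eps / (Rabs c + 1)))
  by (apply Rmult_le_compat_l; [apply Rabs_pos|lra]).
assert (Rabs c * (eps / (Rabs c + 1)) < eps)
  by (apply (Rmult_lt_reg_r (Rabs c + 1)); [assumption|field_simplify; lra]).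
lra.
Qed.

Lemma right_continuous_at0_fsum n (F : nat -> R -> R) :
  (forall j, (j < n)%nat -> right_continuous_at0 (F j)) ->
  right_continuous_at0 (fun t => fsum n (fun j => F j t)).
Proof.
induction n; intros HF; simpl.
- intros eps He. exists 1. split; [lra|]. intros. rewrite Rminus_diag, Rabs_R0. assumption.
- apply (right_continuous_at0_add (fun t => fsum n (fun j => F j t)) (F n));
    [apply IHn; intros|]; apply HF; lia.
Qed.

Lemma eq_at0_of_right_continuous f : right_continuous_at0 f ->
  (forall s t, 0 < s -> s <= t -> f t = f s) -> forall t, 0 < t -> f t = f 0.
Proof.
intros Hf Hconst t Ht.
apply Rminus_diag_uniq. destruct (Req_dec (f t - f 0) 0) as [|Hne]; [assumption|].
exfalso.
destruct (Hf (Rabs (f t - f 0))) as [d [Hd Hfd]]; [apply Rabs_pos_lt; assumption|].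
set (s := Rmin d t / 2).
pose proof (Rmin_l d t). pose proof (Rmin_r d t).
assert (0 < Rmin d t) by (apply Rmin_pos; assumption).
specialize (Hfd s ltac:(unfold s; lra)).
rewrite (Hconst s t) in Hfd by (unfold s; lra). lra.
Qed.

Lemma tends_at_infty_of_sq_mul_le (f : R -> R) l C :
  (forall t, 1 < t -> (f t - l) ^ 2 * (t - 1) <= C) -> tends_at_infty f l.
Proof.
intros Hf eps He.
assert (He2 : 0 < eps ^ 2) by (apply pow_lt; assumption).
assert (HC : 0 <= Rabs C) by apply Rabs_pos.
assert (Hq : 0 < (Rabs C + 1) / eps ^ 2) by (apply Rdiv_lt_0_compat; lra).
exists (1 + (Rabs C + 1) / eps ^ 2). intros t Ht.
destruct (Rlt_or_le (Rabs (f t - l)) eps) as [|Hge]; [assumption|]. exfalso.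
assert (Hsq : eps ^ 2 <= (f t - l) ^ 2)
  by (rewrite <- (pow2_abs (f t - l)); apply pow_incr; lra).
assert (Hmul : eps ^ 2 * (t - 1) <= (f t - l) ^ 2 * (t - 1)) by (apply Rmult_le_compat_r; lra).
assert (eps ^ 2 * ((Rabs C + 1) / eps ^ 2) = Rabs C + 1) by (field; lra).
pose proof (Hf t ltac:(lra)). pose proof (Rle_abs C). nra.
Qed.

Lemma normal_equations N m H z ystar : least_squares_sol N m H z ystar ->
  forall k, (k < m)%nat -> fsum N (fun i => H i k * (z i - dot m (H i) ystar)) = 0.
Proof.
intros Hls k Hk.
set (b := fsum N (fun i => H i k * (z i - dot m (H i) ystar))).
set (C := fsum N (fun i => H i k ^ 2)).
assert (HC : 0 <= C) by (apply fsum_nonneg; intros; apply pow2_ge_0).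
assert (Hres : forall e, residual2 N m H z (fun l => ystar l + e * (if Nat.eqb l k then 1 else 0))
                 = residual2 N m H z ystar - 2 * e * b + e ^ 2 * C).
{ intros e. unfold residual2, b, C.
  rewrite (fsum_ext N _ (fun i => (z i - matvec m H ystar i) ^ 2
            + (- 2 * e) * (H i k * (z i - dot m (H i) ystar)) + e ^ 2 * (H i k ^ 2))).
  - rewrite !fsum_plus, !fsum_scal. ring.
  - intros i Hi. unfold matvec, dot.
    rewrite (fsum_ext m _ (fun l => H i l * ystar l + e * (H i l * (if Nat.eqb l k then 1 else 0))))
      by (intros; ring).
    rewrite fsum_plus, fsum_scal, fsum_delta by assumption. ring. }
specialize (Hls (fun l => ystar l + (b / (C + 1)) * (if Nat.eqb l k then 1 else 0))).
rewrite Hres in Hls.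
assert (Hq : 0 <= - (b ^ 2) * (C + 2) / ((C + 1) ^ 2)).
{ replace (- (b ^ 2) * (C + 2) / ((C + 1) ^ 2))
    with (- 2 * (b / (C + 1)) * b + (b / (C + 1)) ^ 2 * C) by (field; lra). lra. }
assert (0 < (C + 1) ^ 2) by nra.
assert (0 <= - (b ^ 2) * (C + 2)).
{ apply (Rmult_le_reg_r (/ (C + 1) ^ 2)); [apply Rinv_0_lt_compat; assumption|].
  rewrite Rmult_0_l. exact Hq. }
nra.
Qed.

Definition gram N (H : nat -> nat -> R) l j : R := fsum N (fun i => H i l * H i j).

Lemma gram_injective N m H : full_col_rank N m H ->
  forall v : nat -> R, (forall l, (l < m)%nat -> fsum m (fun j => gram N H l j * v j) = 0) ->
  forall k, (k < m)%nat -> v k = 0.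
Proof.
intros Hrank v Hv. apply Hrank.
assert (Hnorm : fsum N (fun i => matvec m H v i ^ 2)
                = fsum m (fun l => v l * fsum m (fun j => gram N H l j * v j))).
{ unfold matvec, dot, gram.
  rewrite (fsum_ext N _ (fun i => fsum m (fun l => v l * (H i l * fsum m (fun j => H i j * v j))))).
  - rewrite fsum_swap. apply fsum_ext. intros l Hl. rewrite fsum_scal. f_equal.
    rewrite (fsum_ext N _ (fun i => fsum m (fun j => H i l * H i j * v j)))
      by (intros; rewrite <- fsum_scal; apply fsum_ext; intros; ring).
    rewrite fsum_swap. apply fsum_ext. intros. rewrite fsum_scalr. reflexivity.
  - intros i Hi.
    transitivity (fsum m (fun l => H i l * v l) * fsum m (fun j => H i j * v j)); [ring|].
    rewrite <- fsum_scalr. apply fsum_ext. intros. ring. }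
assert (Hzero : fsum N (fun i => matvec m H v i ^ 2) = 0).
{ rewrite Hnorm, (fsum_ext m _ (fun _ => 0)), fsum_zero; [reflexivity|].
  intros l Hl. rewrite Hv by assumption. ring. }
intros i Hi.
assert (matvec m H v i ^ 2 = 0)
  by (apply (fsum_eq0 N (fun i => matvec m H v i ^ 2)); [intros; apply pow2_ge_0|assumption..]).
nra.
Qed.

Definition avg N (x : nat -> nat -> R) k : R := / INR N * fsum N (fun j => x j k).

Definition dev N (x : nat -> nat -> R) i k : R := x i k - avg N x k.

Definition proj_dev N m (H : nat -> nat -> R) x i k : R :=
  dev N x i k - H i k * dot m (H i) (dev N x i).

Definition inner2 N m (y w : nat -> nat -> R) : R :=
  fsum N (fun i => fsum m (fun k => y i k * w i k)).

Definition norm2 N m (y : nat -> nat -> R) : R := inner2 N m y y.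

Lemma inner2_comm N m y w : inner2 N m y w = inner2 N m w y.
Proof.
unfold inner2. apply fsum_ext. intros. apply fsum_ext. intros. ring.
Qed.

Lemma inner2_scale_r N m y c w :
  inner2 N m y (fun i k => c * w i k) = c * inner2 N m y w.
Proof.
unfold inner2. rewrite <- fsum_scal. apply fsum_ext. intros.
rewrite <- fsum_scal. apply fsum_ext. intros. ring.
Qed.

Lemma norm2_nonneg N m y : 0 <= norm2 N m y.
Proof. apply fsum_nonneg. intros. apply fsum_nonneg. intros. apply Rle_0_sqr. Qed.

Lemma derivable_pt_lim_norm2 N m (Y : R -> nat -> nat -> R) DY t :
  (forall i k, (i < N)%nat -> (k < m)%nat -> derivable_pt_lim (fun s => Y s i k) t (DY i k)) ->
  derivable_pt_lim (fun s => norm2 N m (Y s)) t (2 * inner2 N m (Y t) DY).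
Proof.
intros HY.
replace (2 * inner2 N m (Y t) DY)
  with (fsum N (fun i => fsum m (fun k => DY i k * Y t i k + Y t i k * DY i k))).
- apply (derivable_pt_lim_fsum N (fun i s => fsum m (fun k => Y s i k * Y s i k))).
  intros i Hi. apply (derivable_pt_lim_fsum m (fun k s => Y s i k * Y s i k)).
  intros k Hk. apply derivable_pt_lim_mul; apply HY; assumption.
- unfold inner2. rewrite <- fsum_scal. apply fsum_ext. intros.
  rewrite <- fsum_scal. apply fsum_ext. intros. ring.
Qed.

Section Linear.

Variables (N m : nat) (H : nat -> nat -> R).

Lemma dev_scale c y i k : dev N (fun i k => c * y i k) i k = c * dev N y i k.
Proof. unfold dev, avg. rewrite fsum_scal. ring. Qed.

Lemma proj_dev_scale c y i k :
  proj_dev N m H (fun i k => c * y i k) i k = c * proj_dev N m H y i k.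
Proof.
unfold proj_dev, dot. rewrite dev_scale.
rewrite (fsum_ext m _ (fun k => c * (H i k * dev N y i k))) by (intros; rewrite dev_scale; ring).
rewrite fsum_scal. ring.
Qed.

Variables (X : R -> nat -> nat -> R) (D : nat -> nat -> R) (t : R).
Hypothesis HX : forall i k, (i < N)%nat -> (k < m)%nat ->
  derivable_pt_lim (fun s => X s i k) t (D i k).

Lemma derivable_pt_lim_dev i k : (i < N)%nat -> (k < m)%nat ->
  derivable_pt_lim (fun s => dev N (X s) i k) t (dev N D i k).
Proof.
intros Hi Hk. apply derivable_pt_lim_sub; [apply HX; assumption|].
apply derivable_pt_lim_scale, (derivable_pt_lim_fsum N (fun j s => X s j k)).
intros. apply HX; assumption.
Qed.

Lemma derivable_pt_lim_proj_dev i k : (i < N)%nat -> (k < m)%nat ->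
  derivable_pt_lim (fun s => proj_dev N m H (X s) i k) t (proj_dev N m H D i k).
Proof.
intros Hi Hk. apply derivable_pt_lim_sub; [apply derivable_pt_lim_dev; assumption|].
apply derivable_pt_lim_scale, (derivable_pt_lim_fsum m (fun k s => H i k * dev N (X s) i k)).
intros. apply derivable_pt_lim_scale, derivable_pt_lim_dev; assumption.
Qed.

End Linear.

Section Geometry.

Variables (N m : nat) (H : nat -> nat -> R).
Hypothesis HN : (1 <= N)%nat.

Lemma INR_N_neq0 : INR N <> 0.
Proof. apply not_0_INR. lia. Qed.

Lemma fsum_dev y k : fsum N (fun i => dev N y i k) = 0.
Proof.
unfold dev. rewrite fsum_minus, fsum_const. unfold avg. field. apply INR_N_neq0.
Qed.

Lemma inner2_dev_r y w : inner2 N m y (dev N w) = inner2 N m (dev N y) (dev N w).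
Proof.
unfold inner2. rewrite !(fsum_swap N m). apply fsum_ext. intros k Hk.
rewrite (fsum_ext N (fun i => dev N y i k * dev N w i k)
           (fun i => y i k * dev N w i k - avg N y k * dev N w i k)) by (intros; unfold dev; ring).
rewrite fsum_minus, fsum_scal, fsum_dev. ring.
Qed.

Lemma pc_rhs_complete z a x i k :
  pc_rhs N m H z (fun _ _ => a) x i k = - (a * INR N) * proj_dev N m H x i k.
Proof.
unfold pc_rhs.
rewrite (fsum_ext N _ (fun j => a * ((x j k - x i k) - H i k * (dot m (H i) (x j) - dot m (H i) (x i))))).
2:{ intros j Hj. destruct (Nat.eq_dec j i) as [->|]; [ring|]. unfold projA. ring. }
rewrite fsum_scal, fsum_minus, fsum_minus, fsum_scal, fsum_minus, !fsum_const.
assert (Havg : fsum N (fun j => dot m (H i) (x j)) = INR N * dot m (H i) (avg N x)).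
{ unfold dot, avg. rewrite fsum_swap, <- fsum_scal. apply fsum_ext. intros.
  rewrite fsum_scal. field. apply INR_N_neq0. }
assert (Hdev : dot m (H i) (dev N x i) = dot m (H i) (x i) - dot m (H i) (avg N x)).
{ unfold dot, dev. rewrite <- fsum_minus. apply fsum_ext. intros. ring. }
unfold proj_dev. rewrite Havg, Hdev. unfold dev, avg. field. apply INR_N_neq0.
Qed.

Hypothesis Hunit : forall i, (i < N)%nat -> dot m (H i) (H i) = 1.

Lemma dot_proj_dev y i : (i < N)%nat -> dot m (H i) (proj_dev N m H y i) = 0.
Proof.
intros Hi. unfold dot, proj_dev.
rewrite (fsum_ext m _ (fun k => H i k * dev N y i k + (- dot m (H i) (dev N y i)) * (H i k * H i k)))
  by (intros; ring).
rewrite fsum_plus, fsum_scal. fold (dot m (H i) (H i)). rewrite Hunit by assumption.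
unfold dot. ring.
Qed.

Lemma inner2_proj_dev y w :
  inner2 N m (proj_dev N m H y) (proj_dev N m H w) = inner2 N m (proj_dev N m H y) (dev N w).
Proof.
unfold inner2. apply fsum_ext. intros i Hi.
rewrite (fsum_ext m _ (fun k => proj_dev N m H y i k * dev N w i k
           + (- dot m (H i) (dev N w i)) * (H i k * proj_dev N m H y i k)))
  by (intros; unfold proj_dev at 2; ring).
rewrite fsum_plus, fsum_scal. fold (dot m (H i) (proj_dev N m H y i)).
rewrite dot_proj_dev by assumption. ring.
Qed.

End Geometry.

Section GramBound.

Variables (N m : nat) (H : nat -> nat -> R) (z ystar : nat -> R).
Hypothesis HN : (1 <= N)%nat.
Hypothesis Hls : least_squares_sol N m H z ystar.

Lemma fsum_proj_dev_gram y : (forall i, (i < N)%nat -> dot m (H i) (y i) = z i) ->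
  forall l, (l < m)%nat ->
  fsum N (fun i => proj_dev N m H y i l) = fsum m (fun j => gram N H l j * (avg N y j - ystar j)).
Proof.
intros Hy l Hl.
unfold proj_dev. rewrite fsum_minus, fsum_dev by assumption.
rewrite (fsum_ext N (fun i => H i l * dot m (H i) (dev N y i))
           (fun i => H i l * (z i - dot m (H i) ystar)
                     - fsum m (fun j => H i l * H i j * (avg N y j - ystar j)))).
- rewrite fsum_minus, normal_equations, fsum_swap by assumption.
  rewrite !Rminus_0_l, Ropp_involutive. apply fsum_ext. intros j Hj.
  unfold gram. rewrite fsum_scalr. reflexivity.
- intros i Hi.
  assert (Hdev : dot m (H i) (dev N y i) = z i - dot m (H i) (avg N y)).
  { rewrite <- Hy by assumption. unfold dot, dev. rewrite <- fsum_minus.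
    apply fsum_ext. intros. ring. }
  rewrite Hdev.
  rewrite (fsum_ext m _ (fun j => H i l * (H i j * avg N y j - H i j * ystar j))) by (intros; ring).
  rewrite fsum_scal, fsum_minus. unfold dot. ring.
Qed.

Hypothesis Hrank : full_col_rank N m H.

Lemma avg_error_sq_le k : (k < m)%nat -> exists K, 0 <= K /\
  forall y, (forall i, (i < N)%nat -> dot m (H i) (y i) = z i) ->
  (avg N y k - ystar k) ^ 2 <= K * norm2 N m (proj_dev N m H y).
Proof.
intros Hk.
destruct (MatrixInverse.injective_left_inverse m (gram N H) (gram_injective N m H Hrank))
  as [B HB].
exists (INR m * fsum m (fun l => B k l ^ 2) * INR N). split.
{ apply Rmult_le_pos; [apply Rmult_le_pos|]; [apply pos_INR| |apply pos_INR].
  apply fsum_nonneg. intros. apply pow2_ge_0. }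
intros y Hy.
set (u := proj_dev N m H y). set (W := norm2 N m u).
set (U := fun l => fsum N (fun i => u i l)).
assert (HU : forall l, (l < m)%nat -> U l ^ 2 <= INR N * W).
{ intros l Hl. eapply Rle_trans; [apply fsum_sq_le|].
  apply Rmult_le_compat_l; [apply pos_INR|].
  unfold W, norm2, inner2. rewrite (fsum_swap N m).
  rewrite (fsum_ext N _ (fun i => u i l * u i l)) by (intros; ring).
  apply (fsum_term_le m (fun k => fsum N (fun i => u i k * u i k))); [assumption|].
  intros. apply fsum_nonneg. intros. apply Rle_0_sqr. }
assert (Herr : avg N y k - ystar k = fsum m (fun l => B k l * U l)).
{ rewrite (HB (fun j => avg N y j - ystar j) k Hk). apply fsum_ext. intros l Hl.
  unfold U, u. rewrite fsum_proj_dev_gram by assumption. reflexivity. }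
rewrite Herr. eapply Rle_trans; [apply fsum_sq_le|].
rewrite !Rmult_assoc. apply Rmult_le_compat_l; [apply pos_INR|].
rewrite <- fsum_scalr. apply fsum_le. intros l Hl.
rewrite Rpow_mult_distr. apply Rmult_le_compat_l; [apply pow2_ge_0|]. apply HU. assumption.
Qed.

End GramBound.

Section Flow.

Variables (N m : nat) (H : nat -> nat -> R) (z : nat -> R) (aS : R) (x : R -> nat -> nat -> R).
Hypothesis HN : (1 <= N)%nat.
Hypothesis Hunit : forall i, (i < N)%nat -> dot m (H i) (H i) = 1.
Hypothesis HaS : 0 < aS.
Hypothesis Hode : forall t, 0 < t -> forall i k, (i < N)%nat -> (k < m)%nat ->
  derivable_pt_lim (fun s => x s i k) t (pc_rhs N m H z (fun _ _ => aS) (x t) i k).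

Let c := - (aS * INR N).

Lemma rate_neg : c < 0.
Proof. unfold c. assert (0 < INR N) by (apply lt_0_INR; lia). nra. Qed.

Lemma flow_proj_dev t : 0 < t -> forall i k, (i < N)%nat -> (k < m)%nat ->
  derivable_pt_lim (fun s => x s i k) t (c * proj_dev N m H (x t) i k).
Proof.
intros Ht i k Hi Hk. unfold c. rewrite <- (pc_rhs_complete N m H HN z). apply Hode; assumption.
Qed.

Lemma derivable_disagreement t : 0 < t ->
  derivable_pt_lim (fun s => norm2 N m (dev N (x s))) t
    (2 * c * norm2 N m (proj_dev N m H (x t))).
Proof.
intros Ht.
replace (2 * c * norm2 N m (proj_dev N m H (x t)))
  with (2 * inner2 N m (dev N (x t)) (fun i k => c * dev N (proj_dev N m H (x t)) i k)).
- apply derivable_pt_lim_norm2. intros i k Hi Hk. rewrite <- dev_scale.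
  apply (derivable_pt_lim_dev N m); [|assumption..]. apply flow_proj_dev. assumption.
- rewrite inner2_scale_r, inner2_comm, <- inner2_dev_r, <- inner2_proj_dev by assumption.
  unfold norm2. ring.
Qed.

Lemma derivable_proj_disagreement t : 0 < t ->
  derivable_pt_lim (fun s => norm2 N m (proj_dev N m H (x s))) t
    (2 * c * norm2 N m (dev N (proj_dev N m H (x t)))).
Proof.
intros Ht.
replace (2 * c * norm2 N m (dev N (proj_dev N m H (x t))))
  with (2 * inner2 N m (proj_dev N m H (x t))
                       (fun i k => c * proj_dev N m H (proj_dev N m H (x t)) i k)).
- apply derivable_pt_lim_norm2. intros i k Hi Hk. rewrite <- proj_dev_scale.
  apply derivable_pt_lim_proj_dev; [|assumption..]. apply flow_proj_dev. assumption.
- rewrite inner2_scale_r, inner2_proj_dev, inner2_dev_r by assumption.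
  unfold norm2. ring.
Qed.

Lemma proj_disagreement_nonincreasing s t : 0 < s -> s <= t ->
  norm2 N m (proj_dev N m H (x t)) <= norm2 N m (proj_dev N m H (x s)).
Proof.
intros Hs Hst.
apply (nonincreasing_of_derivative_nonpos (fun r => norm2 N m (proj_dev N m H (x r)))
         (fun r => 2 * c * norm2 N m (dev N (proj_dev N m H (x r)))) 0 t);
  [intros r Hr; apply derivable_proj_disagreement; lra| |lra..].
intros r Hr. pose proof rate_neg. pose proof (norm2_nonneg N m (dev N (proj_dev N m H (x r)))).
nra.
Qed.

Lemma disagreement_bound T : 1 < T ->
  2 * (aS * INR N) * norm2 N m (proj_dev N m H (x T)) * (T - 1) <= norm2 N m (dev N (x 1)).
Proof.
intros HT.
set (w := norm2 N m (proj_dev N m H (x T))).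
(* [V(s) - 2 c w s] is nonincreasing on [(0, T]], since [W(s) >= w = W(T)] there *)
assert (Hphi : norm2 N m (dev N (x T)) - 2 * c * w * T <= norm2 N m (dev N (x 1)) - 2 * c * w * 1).
{ apply (nonincreasing_of_derivative_nonpos (fun s => norm2 N m (dev N (x s)) - 2 * c * w * s)
           (fun s => 2 * c * norm2 N m (proj_dev N m H (x s)) - 2 * c * w) 0 T); [| |lra..].
  - intros r Hr. apply derivable_pt_lim_sub; [apply derivable_disagreement; lra|].
    replace (2 * c * w) with (2 * c * w * 1) at 2 by ring.
    apply derivable_pt_lim_scale, derivable_pt_lim_id.
  - intros r Hr. pose proof rate_neg.
    assert (w <= norm2 N m (proj_dev N m H (x r))) by (apply proj_disagreement_nonincreasing; lra).
    nra. }
pose proof (norm2_nonneg N m (dev N (x T))).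
unfold c in Hphi. nra.
Qed.

Hypothesis Hinit : forall i, (i < N)%nat -> dot m (H i) (x 0 i) = z i.
Hypothesis Hcont0 : forall i k, (i < N)%nat -> (k < m)%nat ->
  forall eps, 0 < eps -> exists delta, 0 < delta /\
    forall t, 0 <= t < delta -> Rabs (x t i k - x 0 i k) < eps.

Lemma measurement_conserved t i : 0 < t -> (i < N)%nat -> dot m (H i) (x t i) = z i.
Proof.
intros Ht Hi.
set (g := fun s => dot m (H i) (x s i)).
assert (Hg' : forall r, 0 < r -> derivable_pt_lim g r 0).
{ intros r Hr. unfold g, dot.
  replace 0 with (fsum m (fun k => H i k * (c * proj_dev N m H (x r) i k))).
  - apply (derivable_pt_lim_fsum m (fun k s => H i k * x s i k)). intros k Hk.
    apply derivable_pt_lim_scale, flow_proj_dev; assumption.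
  - rewrite (fsum_ext m _ (fun k => c * (H i k * proj_dev N m H (x r) i k))) by (intros; ring).
    rewrite fsum_scal. fold (dot m (H i) (proj_dev N m H (x r) i)).
    rewrite dot_proj_dev by assumption. ring. }
assert (Hconst : forall s t, 0 < s -> s <= t -> g t = g s).
{ intros s t' Hs Hst. apply Rle_antisym.
  - apply (nonincreasing_of_derivative_nonpos g (fun _ => 0) 0 t');
      [intros r Hr; apply Hg'; lra|intros; lra|lra..].
  - assert (-1 * g t' <= -1 * g s); [|lra].
    apply (nonincreasing_of_derivative_nonpos (fun s => -1 * g s) (fun _ => 0) 0 t');
      [|intros; lra|lra..].
    intros r Hr. replace 0 with (-1 * 0) by ring. apply derivable_pt_lim_scale, Hg'. lra. }
assert (Hcont : right_continuous_at0 g).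
{ apply (right_continuous_at0_fsum m (fun k s => H i k * x s i k)). intros k Hk.
  apply (right_continuous_at0_scale (H i k) (fun s => x s i k)). intros eps He.
  apply Hcont0; assumption. }
rewrite <- (Hinit i Hi). exact (eq_at0_of_right_continuous g Hcont Hconst t Ht).
Qed.

End Flow.

(* Neither [Hm] nor case (III) ([HIII]) is needed: the argument only uses that
   [ystar] satisfies the normal equations. *)
Theorem theorem8
  (N m : nat) (HN : (1 <= N)%nat) (Hm : (1 <= m)%nat)
  (H : nat -> nat -> R) (z : nat -> R)
  (Hunit : forall i, (i < N)%nat -> dot m (H i) (H i) = 1)
  (HIII : not_in_col_space N m H z)
  (Hrank : full_col_rank N m H)
  (ystar : nat -> R) (Hls : least_squares_sol N m H z ystar)
  (aS : R) (HaS : 0 < aS)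
  (x : R -> nat -> nat -> R)
  (Hinit : forall i, (i < N)%nat -> dot m (H i) (x 0 i) = z i)
  (Hcont0 : forall i k, (i < N)%nat -> (k < m)%nat ->
     forall eps, 0 < eps -> exists delta, 0 < delta /\
       forall t, 0 <= t < delta -> Rabs (x t i k - x 0 i k) < eps)
  (Hode : forall t, 0 < t -> forall i k, (i < N)%nat -> (k < m)%nat ->
     derivable_pt_lim (fun s => x s i k) t
       (pc_rhs N m H z (fun _ _ => aS) (x t) i k)) :
  forall k, (k < m)%nat ->
    tends_at_infty (fun t => / INR N * fsum N (fun i => x t i k)) (ystar k).
Proof.
intros k Hk.
destruct (avg_error_sq_le N m H z ystar HN Hls Hrank k Hk) as [K [HK Herr]].
set (rate := 2 * (aS * INR N)).
assert (Hrate : 0 < rate).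
{ unfold rate. assert (0 < INR N) by (apply lt_0_INR; lia).
  apply Rmult_lt_0_compat; [lra|apply Rmult_lt_0_compat; assumption]. }
apply (tends_at_infty_of_sq_mul_le _ _ (K * norm2 N m (dev N (x 1)) / rate)).
intros t Ht. change (/ INR N * fsum N (fun i => x t i k)) with (avg N (x t) k).
assert (Hfeasible : forall i, (i < N)%nat -> dot m (H i) (x t i) = z i)
  by (intros i Hi; exact (measurement_conserved N m H z aS x HN Hunit Hode Hinit Hcont0 t i
                            ltac:(lra) Hi)).
pose proof (disagreement_bound N m H z aS x HN Hunit HaS Hode t Ht) as Hdecay.
fold rate in Hdecay.
apply Rle_trans with (K * norm2 N m (proj_dev N m H (x t)) * (t - 1)).
- apply Rmult_le_compat_r; [lra|]. apply Herr. exact Hfeasible.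
- apply (Rmult_le_reg_l rate); [exact Hrate|].
  replace (rate * (K * norm2 N m (dev N (x 1)) / rate)) with (K * norm2 N m (dev N (x 1)))
    by (field; lra).
  replace (rate * (K * norm2 N m (proj_dev N m H (x t)) * (t - 1)))
    with (K * (rate * norm2 N m (proj_dev N m H (x t)) * (t - 1))) by ring.
  apply Rmult_le_compat_l; assumption.
Qed.
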